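(* Let $T$ be a set of SGD iterations with $T\subseteq\{s:s\ge\tau\}$, where Assumption 1 holds with constants $\tau,\gamma$, let $t\in T$, and let $\mathcal R_{\mathbf x}$ be a linear region of $f^{(t)}$. Suppose there exists $\mathbf k\in\mathbb R^{|T|}$ such that $$\prod_{l=d-1}^{1}[\mathbf S_l^{(t)}(\mathbf x)](i_l,i_l)=\sum_{k\in T}\mathbf k(k)\prod_{l=d-1}^{1}[\mathbf S_l^{(k)}(\mathbf x^{(k)})](i_l,i_l)$$ for all $i_l\in\{1,\dots,n_l\}$, $l=1,\dots,d-1$. Then $f^{(t)}$ is Lipschitz on $\mathcal R_{\mathbf x}$ with $$\lambda_{f^{(t)}}(\mathcal R_{\mathbf x})\le(1+\gamma)\sum_{k\in T}|\mathbf k(k)|\,\frac{|\mathbf S_d^{(t)}(\mathbf x)|}{|\mathbf S_d^{(t)}(\mathbf x^{(k)})|}\,\lambda_{f^{(k)}}(\mathcal R_{\mathbf x^{(k)}}),$$ where $\mathbf S_d^{(t)}(\mathbf z)=\rho_d'(u)$ evaluated at $u=\mathbf W_d^{(t)}f_{d-1}^{(t)}\circ\cdots\circ f_1^{(t)}(\mathbf z)+\mathbf b_d^{(t)}$.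
   Context: Network: $f(\mathbf x,\mathbf w)=f_d\circ\cdots\circ f_1(\mathbf x)$ with $f_l(\mathbf x)=\rho_l(\mathbf W_l\mathbf x+\mathbf b_l)$, $\mathbf W_l\in\mathbb R^{n_l\times n_{l-1}}$, $n_0=n$, $n_d=1$; $\rho_l$ ReLU for $l<d$, $\rho_d$ identity or sigmoid. SGD on training set $X$: at iteration $s$ a point $\mathbf x^{(s)}\in X$ is sampled and parameters updated by a gradient step; $f^{(s)}$ is the network with parameters $\mathbf W_l^{(s)},\mathbf b_l^{(s)}$. Activation matrices $\mathbf S_l^{(s)}(\mathbf x)=\mathrm{diag}(\mathbb 1[f_l\circ\cdots\circ f_1(\mathbf x,\mathbf w^{(s)})>0])$ for $l<d$. Local Lipschitz constant on the linear region $\mathcal R_{\mathbf x}$: $\lambda_{f^{(s)}}(\mathcal R_{\mathbf x}):=\|\mathbf S_d^{(s)}(\mathbf x)\mathbf W_d^{(s)}\mathbf S_{d-1}^{(s)}(\mathbf x)\cdots\mathbf S_1^{(s)}(\mathbf x)\mathbf W_1^{(s)}\|_2$. Activation vector $\mathbf s_s(\mathbf x):=\bigotimes_{l=d-1}^1\mathrm{diag}(\mathbf S_l^{(s)}(\mathbf x))$. Assumption 1: there exist $\tau,\gamma>0$ such that $\mathbf s_s(\mathbf x)=\mathbf s_{s'}(\mathbf x)$ and $\lambda_{f^{(s)}}(\mathcal R_{\mathbf x})\le(1+\gamma)\lambda_{f^{(s')}}(\mathcal R_{\mathbf x})$ for all $\mathbf x\in X$ and $s,s'\ge\tau$. *)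

From HB Require Import structures.
From mathcomp Require Import all_boot all_order all_algebra.
From mathcomp Require Import all_classical all_reals all_analysis.
Set Implicit Arguments. Unset Strict Implicit. Unset Printing Implicit Defensive.
Import Order.TTheory GRing.Theory Num.Theory.
Local Open Scope ring_scope.
Local Open Scope classical_set_scope.

(* Network f = f_d o ... o f_1 with L := d-1 hidden ReLU layers.
   Widths: n 0 = input dimension, n l = width of hidden layer l (1 <= l <= L),
   n_d = 1 (output layer is a 1 x n L row vector plus a scalar bias).
   Hidden layer l+1 (paper index) has weight W l : 'M_(n l.+1, n l) and
   bias b l : 'cV_(n l.+1) (0-based field index l). *)
Record params (R : realType) (n : nat -> nat) (L : nat) := Params {
  W : forall l : nat, 'M[R]_(n l.+1, n l);
  b : forall l : nat, 'cV[R]_(n l.+1);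
  Wd : 'rV[R]_(n L);
  bd : R }.

Section Net.
Variables (R : realType) (n : nat -> nat) (L : nat).

Definition relu (a : R) : R := Num.max a 0.

Fixpoint hidden (p : params R n L) (x : 'cV[R]_(n 0)) (l : nat) : 'cV[R]_(n l) :=
  match l with
  | 0 => x
  | l'.+1 => map_mx relu (W p l' *m hidden p x l' + b p l')
  end.

(* Activation matrix S_{l+1}(x) = diag(1[f_{l+1} o ... o f_1 (x) > 0]) *)
Definition Sact (p : params R n L) (x : 'cV[R]_(n 0)) (l : nat) : 'M[R]_(n l.+1) :=
  diag_mx (\row_j (if 0 < hidden p x l.+1 j 0 then 1 else 0)).

Definition outpre (p : params R n L) (x : 'cV[R]_(n 0)) : R :=
  (Wd p *m hidden p x L) 0 0 + bd p.

Fixpoint chain (p : params R n L) (x : 'cV[R]_(n 0)) (l : nat) : 'M[R]_(n l, n 0) :=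
  match l with
  | 0 => 1%:M
  | l'.+1 => Sact p x l' *m W p l' *m chain p x l'
  end.
End Net.

Inductive outact := OutId | OutSigmoid.

Definition sigmoid {R : realType} (u : R) : R := (1 + expR (- u))^-1.

Definition rho_d' {R : realType} (a : outact) (u : R) : R :=
  match a with
  | OutId => 1
  | OutSigmoid => sigmoid u * (1 - sigmoid u)
  end.

Definition Sd {R : realType} {n L} (a : outact) (p : params R n L)
  (x : 'cV[R]_(n 0)) : R := rho_d' a (outpre p x).

Definition vnorm {R : realType} {m} (v : 'cV[R]_m) : R :=
  Num.sqrt (\sum_i v i 0 ^+ 2).

Definition spec_norm {R : realType} {m k} (A : 'M[R]_(m, k)) : R :=
  sup [set vnorm (A *m v) | v in [set v : 'cV[R]_k | vnorm v <= 1]].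

(* local Lipschitz constant on the linear region R_x:
   || S_d W_d S_{d-1} W_{d-1} ... S_1 W_1 ||_2 *)
Definition lambda {R : realType} {n L} (a : outact) (p : params R n L)
  (x : 'cV[R]_(n 0)) : R :=
  spec_norm ((Sd a p x)%:M *m Wd p *m chain p x L).

Definition mindex (n : nat -> nat) (L : nat) := forall l : 'I_L, 'I_(n l.+1).

(* Entry of the activation vector s(x) = (x)_{l=d-1}^{1} diag(S_l(x))
   at multi-index i:  prod_l [S_l(x)](i_l, i_l) *)
Definition actvec {R : realType} {n L} (p : params R n L) (x : 'cV[R]_(n 0))
  (i : mindex n L) : R :=
  \prod_(l < L) Sact p x l (i l) (i l).

Definition assumption1 {R : realType} {n L} (a : outact)
  (w : nat -> params R n L) (X : 'cV[R]_(n 0) -> Prop) (tau : nat) (gamma : R) :=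
  (0 < tau)%N /\ 0 < gamma /\
  forall x, X x -> forall s s', (tau <= s)%N -> (tau <= s')%N ->
    actvec (w s) x = actvec (w s') x /\
    lambda a (w s) x <= (1 + gamma) * lambda a (w s') x.

From HB Require Import structures.
From mathcomp Require Import all_boot all_order all_algebra.
From mathcomp Require Import all_classical all_reals all_analysis.
From mathcomp Require Import ring lra.
Import Order.TTheory GRing.Theory Num.Theory.
Local Open Scope ring_scope.
Local Open Scope classical_set_scope.

(* On a linear region the network is the affine map with Jacobian
   S_d W_d S_{d-1} W_{d-1} ... S_1 W_1, and the product W_d S_{d-1} ... S_1 W_1
   is MULTILINEAR in the diagonals of the masks S_1, ..., S_{d-1}: it depends
   on them only through their tensor product, the activation vector s(x).
   Hence a linear relation s_t(x) = sum_k kappa_k s_t(x_k) between activation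
   vectors lifts to the same linear relation between the Jacobians with the
   output factor S_d removed.  The triangle inequality and homogeneity of the
   spectral norm then bound lambda_t(x) by the lambda_t(x_k), and Assumption 1
   (patterns frozen and Lipschitz constants stable after tau) replaces
   s_t(x_k) by s_k(x_k) and lambda_t(x_k) by (1 + gamma) lambda_k(x_k). *)

Section EuclideanNorm.
Context {R : realType} {m : nat}.

Lemma sumsq_ge0 (v : 'cV[R]_m) : 0 <= \sum_i v i 0 ^+ 2.
Proof. by apply: sumr_ge0 => i _; rewrite sqr_ge0. Qed.

Lemma vnorm_ge0 (v : 'cV[R]_m) : 0 <= vnorm v.
Proof. exact: sqrtr_ge0. Qed.

Lemma vnorm0 : vnorm (0 : 'cV[R]_m) = 0.
Proof. by rewrite /vnorm big1 ?sqrtr0 // => i _; rewrite mxE expr0n. Qed.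

Lemma vnormZ (s : R) (v : 'cV[R]_m) : vnorm (s *: v) = `|s| * vnorm v.
Proof.
rewrite /vnorm -sqrtr_sqr -sqrtrM ?sqr_ge0 // mulr_sumr; congr Num.sqrt.
by apply: eq_bigr => i _; rewrite mxE exprMn.
Qed.

Lemma vnorm_coord (v : 'cV[R]_m) i : `|v i 0| <= vnorm v.
Proof.
rewrite -sqrtr_sqr ler_sqrt ?sumsq_ge0 // (bigD1 i) //= lerDl.
by apply: sumr_ge0 => j _; rewrite sqr_ge0.
Qed.

(* Cauchy-Schwarz, from Lagrange's identity
   sum_(i,j) (u_i v_j - u_j v_i)^2 = 2 (|u|^2 |v|^2 - <u,v>^2). *)
Lemma cauchy_schwarz (u v : 'cV[R]_m) :
  (\sum_i u i 0 * v i 0) ^+ 2 <= (\sum_i u i 0 ^+ 2) * (\sum_i v i 0 ^+ 2).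
Proof.
have lagrange : \sum_i \sum_j (u i 0 * v j 0 - u j 0 * v i 0) ^+ 2 =
    2%:R * ((\sum_i u i 0 ^+ 2) * (\sum_i v i 0 ^+ 2) - (\sum_i u i 0 * v i 0) ^+ 2).
  have expand i j : (u i 0 * v j 0 - u j 0 * v i 0) ^+ 2 =
      (u i 0 ^+ 2 * v j 0 ^+ 2 + v i 0 ^+ 2 * u j 0 ^+ 2)
      - 2%:R * ((u i 0 * v i 0) * (u j 0 * v j 0)) by ring.
  under eq_bigr => i _ do under eq_bigr => j _ do rewrite expand.
  under eq_bigr => i _ do rewrite sumrB big_split /= -!mulr_sumr.
  rewrite sumrB big_split /= -!mulr_sumr -!mulr_suml expr2; ring.
have : 0 <= \sum_i \sum_j (u i 0 * v j 0 - u j 0 * v i 0) ^+ 2.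
  by apply: sumr_ge0 => i _; apply: sumr_ge0 => j _; rewrite sqr_ge0.
by rewrite lagrange pmulr_rge0 // subr_ge0.
Qed.

Lemma vnormD (u v : 'cV[R]_m) : vnorm (u + v) <= vnorm u + vnorm v.
Proof.
set A := \sum_i u i 0 ^+ 2; set B := \sum_i v i 0 ^+ 2.
set C := \sum_i u i 0 * v i 0.
have A0 : 0 <= A by apply: sumsq_ge0.
have B0 : 0 <= B by apply: sumsq_ge0.
have C_le : C <= Num.sqrt A * Num.sqrt B.
  apply: le_trans (ler_norm C) _.
  by rewrite -sqrtr_sqr -sqrtrM // ler_sqrt ?mulr_ge0 //; apply: cauchy_schwarz.
have sumsqD : \sum_i (u + v) i 0 ^+ 2 = A + 2%:R * C + B.
  rewrite /A /B /C mulr_sumr -!big_split /=.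
  by apply: eq_bigr => i _; rewrite mxE; ring.
have rhs0 : 0 <= Num.sqrt A + Num.sqrt B by rewrite addr_ge0 ?sqrtr_ge0.
rewrite /vnorm sumsqD -/A -/B -(ger0_norm rhs0) -sqrtr_sqr.
rewrite ler_sqrt ?sqr_ge0 // sqrrD !sqr_sqrtr //.
have : 2%:R * C <= 2%:R * (Num.sqrt A * Num.sqrt B) by rewrite ler_pM2l.
lra.
Qed.

Lemma vnorm_sum (I : Type) (r : seq I) (F : I -> 'cV[R]_m) :
  vnorm (\sum_(k <- r) F k) <= \sum_(k <- r) vnorm (F k).
Proof.
elim: r => [|k r IH]; first by rewrite !big_nil vnorm0.
by rewrite !big_cons; apply: (le_trans (vnormD _ _)); apply: lerD.
Qed.

End EuclideanNorm.

Section SpectralNorm.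
Context {R : realType} {m k : nat}.
Implicit Types A B : 'M[R]_(m, k).

Definition gains A : set R :=
  [set vnorm (A *m v) | v in [set v : 'cV[R]_k | vnorm v <= 1]].

Lemma gains_neq0 A : gains A !=set0.
Proof. by exists (vnorm (A *m 0)), 0 => //=; rewrite vnorm0. Qed.

(* The gains are bounded by the sum of the norms of the columns of A. *)
Lemma gains_has_sup A : has_sup (gains A).
Proof.
split; first exact: gains_neq0.
exists (\sum_(j < k) vnorm (A *m delta_mx j 0)) => _ [v /= v_le1 <-].
have -> : A *m v = \sum_(j < k) v j 0 *: (A *m delta_mx j 0).
  rewrite {1}(matrix_sum_delta v) mulmx_sumr.
  by apply: eq_bigr => j _; rewrite big_ord1 -scalemxAr.
apply: (le_trans (vnorm_sum _ _ _)); apply: ler_sum => j _.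
rewrite vnormZ ler_piMl ?vnorm_ge0 //.
exact: le_trans (vnorm_coord v j) v_le1.
Qed.

Lemma spec_norm_ub A v : vnorm v <= 1 -> vnorm (A *m v) <= spec_norm A.
Proof. by move=> v_le1; apply: (sup_upper_bound (gains_has_sup A)); exists v. Qed.

Lemma spec_norm_le A c :
  (forall v, vnorm v <= 1 -> vnorm (A *m v) <= c) -> spec_norm A <= c.
Proof.
move=> gain_le; apply: ge_sup; first exact: gains_neq0.
by move=> _ [v /= v_le1 <-]; apply: gain_le.
Qed.

Lemma spec_norm_ge0 A : 0 <= spec_norm A.
Proof.
have := @spec_norm_ub A 0.
by rewrite mulmx0 !vnorm0 ler01; apply.
Qed.

Lemma spec_normZ_le (s : R) A : spec_norm (s *: A) <= `|s| * spec_norm A.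
Proof.
apply: spec_norm_le => v v_le1.
by rewrite -scalemxAl vnormZ ler_wpM2l //; apply: spec_norm_ub.
Qed.

Lemma spec_normZ (s : R) A : spec_norm (s *: A) = `|s| * spec_norm A.
Proof.
apply/eqP; rewrite eq_le spec_normZ_le /=.
have [->|s_neq0] := eqVneq s 0.
  by rewrite normr0 mul0r spec_norm_ge0.
have := spec_normZ_le s^-1 (s *: A); rewrite scalerA mulVf // scale1r => le_A.
rewrite -(ler_pM2l (_ : 0 < `|s|^-1)) ?invr_gt0 ?normr_gt0 //.
by rewrite mulrA mulVf ?normr_eq0 // mul1r -normfV.
Qed.

Lemma spec_normD A B : spec_norm (A + B) <= spec_norm A + spec_norm B.
Proof.
apply: spec_norm_le => v v_le1; rewrite mulmxDl.
by apply: (le_trans (vnormD _ _)); apply: lerD; apply: spec_norm_ub.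
Qed.

Lemma spec_norm_lincomb (I : Type) (r : seq I) (c : I -> R) (F : I -> 'M[R]_(m, k)) :
  spec_norm (\sum_(i <- r) c i *: F i) <= \sum_(i <- r) `|c i| * spec_norm (F i).
Proof.
elim: r => [|i r IH]; rewrite ?big_nil ?big_cons.
  by apply: spec_norm_le => v _; rewrite mul0mx vnorm0.
by apply: (le_trans (spec_normD _ _)); rewrite spec_normZ lerD2l.
Qed.

End SpectralNorm.

Lemma ord_max_val {m} {l : 'I_m.+1} : (m <= l)%N -> m = l.
Proof. by move=> ge_lm; apply/eqP; rewrite eqn_leq ge_lm -ltnS ltn_ord. Qed.

(* This product is multilinear in the masks, so it depends on them only
   through the products prod_l d_l(i_l) over multi-indices (i_0, ..., i_{m-1}). *)
Section MaskedChain.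
Context {R : comNzRingType} {n : nat -> nat} (W : forall l, 'M[R]_(n l.+1, n l)).

Fixpoint masked_chain (d : forall l, 'rV[R]_(n l.+1)) (l : nat) : 'M[R]_(n l, n 0) :=
  match l with
  | 0 => 1%:M
  | l'.+1 => diag_mx (d l') *m W l' *m masked_chain d l'
  end.

Lemma masked_chainS (d : forall l, 'rV[R]_(n l.+1)) m p (M : 'M[R]_(p, n m.+1)) :
  M *m masked_chain d m.+1 =
  \sum_a d m 0 a *: (M *m delta_mx a a *m W m *m masked_chain d m).
Proof.
rewrite /= diag_mx_sum_delta !mulmx_suml !mulmx_sumr; apply: eq_bigr => a _.
by rewrite -!scalemxAl -!scalemxAr !mulmxA.
Qed.

Definition ext_index {m} (i : mindex n m) (a : 'I_(n m.+1)) : mindex n m.+1 :=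
  fun l => match ltnP l m with
  | LtnNotGeq lt_lm => i (Ordinal lt_lm)
  | GeqNotLtn ge_lm => cast_ord (congr1 (fun k => n k.+1) (ord_max_val ge_lm)) a
  end.

Lemma prod_ext_index (d : forall l, 'rV[R]_(n l.+1)) m (i : mindex n m) a :
  \prod_(l < m.+1) d l 0 (ext_index i a l) = (\prod_(l < m) d l 0 (i l)) * d m 0 a.
Proof.
rewrite big_ord_recr /=; congr (_ * _).
  apply: eq_bigr => l _; rewrite /ext_index; case: ltnP => [lt_lm | ge_lm].
    by case: l lt_lm => l lt_l lt_l' /=; rewrite (bool_irrelevance lt_l' lt_l).
  by exfalso; move: ge_lm; rewrite leqNgt /= ltn_ord.
rewrite /ext_index; case: ltnP => [lt_mm | ge_mm].
  by exfalso; move: lt_mm; rewrite /= ltnn.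
by congr (d m 0 _); apply: val_inj.
Qed.

(* Multilinearity: a linear relation between the mask products lifts to the
   same linear relation between the masked chains (left-multiplied by any M,
   which makes the induction on the number of layers go through). *)
Lemma masked_chain_lincomb (I : Type) (r : seq I) (c : I -> R)
    (dk : I -> forall l, 'rV[R]_(n l.+1)) (c0 : R) (d0 : forall l, 'rV[R]_(n l.+1)) m :
  (forall i : mindex n m,
     \sum_(k <- r) c k * \prod_(l < m) dk k l 0 (i l) = c0 * \prod_(l < m) d0 l 0 (i l)) ->
  forall p (M : 'M[R]_(p, n m)),
  \sum_(k <- r) c k *: (M *m masked_chain (dk k) m) = c0 *: (M *m masked_chain d0 m).
Proof.
elim: m c c0 => [|m IH] c c0 rel p M.
  have i0 : mindex n 0 by case.
  have := rel i0; rewrite big_ord0 mulr1.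
  by under eq_bigr => k _ do rewrite big_ord0 mulr1; move=> <-; rewrite scaler_suml.
under eq_bigr => k _ do rewrite masked_chainS scaler_sumr.
rewrite masked_chainS scaler_sumr exchange_big /=; apply: eq_bigr => a _.
under eq_bigr => k _ do rewrite scalerA.
rewrite scalerA; apply: IH => i.
have := rel (ext_index i a); under eq_bigr => k _ do rewrite prod_ext_index.
rewrite prod_ext_index [RHS]mulrA [RHS]mulrAC => <-.
by apply: eq_bigr => k _; rewrite mulrA mulrAC.
Qed.

End MaskedChain.

Section NetworkJacobian.
Context {R : realType} {n : nat -> nat} {L : nat} (a : outact).
Implicit Types (p : params R n L) (z : 'cV[R]_(n 0)).

Definition act_mask p z (l : nat) : 'rV[R]_(n l.+1) :=
  \row_j (if 0 < hidden p z l.+1 j 0 then 1 else 0).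

Lemma chain_masked p z l : chain p z l = masked_chain (W p) (act_mask p z) l.
Proof. by elim: l => //= l ->. Qed.

Lemma actvec_masks p z (i : mindex n L) :
  actvec p z i = \prod_(l < L) act_mask p z l 0 (i l).
Proof. by apply: eq_bigr => l _; rewrite /Sact mxE eqxx mulr1n. Qed.

Lemma Sd_neq0 p z : Sd a p z != 0.
Proof.
rewrite /Sd; case: a => /=; first exact: oner_neq0.
rewrite /sigmoid; set e := expR _.
have e_gt0 : 0 < e by apply: expR_gt0.
have sig_gt0 : 0 < (1 + e)^-1 by rewrite invr_gt0; lra.
have sig_lt1 : (1 + e)^-1 < 1 by rewrite invf_lt1; lra.
by apply: lt0r_neq0; apply: mulr_gt0 => //; rewrite subr_gt0.
Qed.

Lemma lambda_factor p z :
  lambda a p z = `|Sd a p z| * spec_norm (Wd p *m chain p z L).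
Proof. by rewrite /lambda mul_scalar_mx -scalemxAl spec_normZ. Qed.

Lemma output_chain_lincomb {p x} {r : seq nat} {c : nat -> R} {zs : nat -> 'cV[R]_(n 0)} :
  (forall i : mindex n L, actvec p x i = \sum_(k <- r) c k * actvec p (zs k) i) ->
  Wd p *m chain p x L = \sum_(k <- r) c k *: (Wd p *m chain p (zs k) L).
Proof.
move=> rel; rewrite -[LHS]scale1r chain_masked.
under eq_bigr => k _ do rewrite chain_masked.
symmetry; apply: masked_chain_lincomb => i.
by rewrite mul1r -actvec_masks rel; apply: eq_bigr => k _; rewrite actvec_masks.
Qed.

Lemma lambda_lincomb_bound {p x} {r : seq nat} {c : nat -> R} {zs : nat -> 'cV[R]_(n 0)} :
  (forall i : mindex n L, actvec p x i = \sum_(k <- r) c k * actvec p (zs k) i) ->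
  lambda a p x <=
    \sum_(k <- r) `|c k| * (`|Sd a p x| / `|Sd a p (zs k)|) * lambda a p (zs k).
Proof.
move=> rel; rewrite lambda_factor (output_chain_lincomb rel).
apply: (le_trans (ler_wpM2l (normr_ge0 _) (spec_norm_lincomb _ _ _ _))).
rewrite mulr_sumr; apply: ler_sum => k _; rewrite lambda_factor.
have Sd_neq : `|Sd a p (zs k)| != 0 by rewrite normr_eq0 Sd_neq0.
by rewrite -mulrA (mulrA (_ / _)) divfK // mulrCA lexx.
Qed.

End NetworkJacobian.

Theorem lemma2 (R : realType) (n : nat -> nat) (L : nat) (a : outact)
  (X : 'cV[R]_(n 0) -> Prop)
  (w : nat -> params R n L) (xs : nat -> 'cV[R]_(n 0))
  (tau : nat) (gamma : R)
  (T : seq nat) (t : nat) (x : 'cV[R]_(n 0)) (kappa : nat -> R) :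
  (forall s, X (xs s)) ->
  assumption1 a w X tau gamma ->
  uniq T -> (forall k, k \in T -> (tau <= k)%N) -> t \in T ->
  (forall i : mindex n L,
     actvec (w t) x i = \sum_(k <- T) kappa k * actvec (w k) (xs k) i) ->
  lambda a (w t) x <=
    (1 + gamma) * \sum_(k <- T)
       `|kappa k| * (`|Sd a (w t) x| / `|Sd a (w t) (xs k)|) * lambda a (w k) (xs k).
Proof.
move=> Xxs [_ [_ stable]] _ late_T tT rel.
have same_pattern k : k \in T -> actvec (w k) (xs k) = actvec (w t) (xs k).
  by move=> kT; have [-> _] := stable _ (Xxs k) k t (late_T k kT) (late_T t tT).
have lambda_stable k : k \in T ->
    lambda a (w t) (xs k) <= (1 + gamma) * lambda a (w k) (xs k).
  by move=> kT; have [_ ->] := stable _ (Xxs k) t k (late_T t tT) (late_T k kT).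
have rel_t i : actvec (w t) x i = \sum_(k <- T) kappa k * actvec (w t) (xs k) i.
  by rewrite rel big_seq [RHS]big_seq; apply: eq_bigr => k kT; rewrite same_pattern.
apply: (le_trans (lambda_lincomb_bound a rel_t)).
rewrite mulr_sumr big_seq [X in _ <= X]big_seq; apply: ler_sum => k kT.
have weight_ge0 : 0 <= `|kappa k| * (`|Sd a (w t) x| / `|Sd a (w t) (xs k)|).
  by rewrite mulr_ge0 ?divr_ge0.
by rewrite (mulrCA (1 + gamma)); apply: ler_wpM2l weight_ge0 _ _ (lambda_stable k kT).
Qed.
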